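(* Let $s\geq 3$ and let $G\in\mathcal{G}_{3}(s)$. Then $G$ is a maximal $3$-$\gamma_{c}$-vertex critical graph.
   Context: All graphs are finite and simple. A set $D\subseteq V(G)$ is a connected dominating set of $G$ if every vertex of $G$ is in $D$ or adjacent to a vertex of $D$, and $G[D]$ is connected; $\gamma_{c}(G)$ is the minimum cardinality of such a set. $G$ is $k$-$\gamma_{c}$-edge critical if $\gamma_{c}(G)=k$ and $\gamma_{c}(G+uv)<k$ for every pair of non-adjacent vertices $u,v$. A $2$-connected graph $G$ is $k$-$\gamma_{c}$-vertex critical if $\gamma_{c}(G)=k$ and $\gamma_{c}(G-v)<k$ for every $v\in V(G)$. $G$ is maximal $k$-$\gamma_{c}$-vertex critical if it is both $k$-$\gamma_{c}$-edge critical and $k$-$\gamma_{c}$-vertex critical. For $s\geq 3$, $\mathcal{G}_{3}(s)$ is the class of graphs (unique up to isomorphism) with vertex set $R\cup T\cup W\cup Z$, where $R=\{r_1,\dots,r_s\}$, $T=\{t_1,\dots,t_s\}$, $W=\{w_1,\dots,w_s\}$, $Z=\{z_1,\dots,z_s\}$ are pairwise disjoint, and whose edges are exactly: for each $1\leq i\leq s$, $r_i$ is joined to every vertex of $(T\cup W)\setminus\{t_i\}$, $t_i$ is joined to every vertex of $(W\cup Z)\setminus\{w_i\}$, and $w_i$ is joined to every vertex of $Z\setminus\{z_i\}$; in addition $R$ and $Z$ each induce a clique. (No other edges; in particular $T$ and $W$ are independent sets.) *)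

(* Finite simple graphs as symmetric irreflexive relations on a finType. *)
From mathcomp Require Import all_boot.
Set Implicit Arguments. Unset Strict Implicit. Unset Printing Implicit Defensive.

Section Graphs.
Variable T : finType.

Definition induced_connected (e : rel T) (D : {set T}) : Prop :=
  D != set0 /\
  forall x y, x \in D -> y \in D ->
    connect (fun a b => [&& e a b, a \in D & b \in D]) x y.

Definition is_cds (e : rel T) (S D : {set T}) : Prop :=
  D \subset S /\
  (forall v, v \in S -> v \in D \/ exists2 d, d \in D & e v d) /\
  induced_connected e D.

Definition gamma_c_is (e : rel T) (S : {set T}) (k : nat) : Prop :=
  (exists D, is_cds e S D /\ #|D| = k) /\
  (forall D, is_cds e S D -> k <= #|D|).

Definition add_edge (e : rel T) (u v : T) : rel T :=
  fun x y => [|| e x y, (x == u) && (y == v) | (x == v) && (y == u)].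

Definition edge_critical (e : rel T) (k : nat) : Prop :=
  gamma_c_is e setT k /\
  forall u v, u != v -> ~~ e u v ->
    exists2 k', k' < k & gamma_c_is (add_edge e u v) setT k'.

Definition two_connected (e : rel T) : Prop :=
  2 < #|T| /\ induced_connected e setT /\
  forall v, induced_connected e (setT :\ v).

Definition vertex_critical (e : rel T) (k : nat) : Prop :=
  two_connected e /\ gamma_c_is e setT k /\
  forall v, exists2 k', k' < k & gamma_c_is e (setT :\ v) k'.

Definition maximal_vertex_critical (e : rel T) (k : nat) : Prop :=
  edge_critical e k /\ vertex_critical e k.

End Graphs.

(* The graph of G_3(s): vertex (p, i) with p = 0,1,2,3 for R,T,W,Z and index i. *)
Definition g3_dir (s : nat) (x y : 'I_4 * 'I_s) : bool :=
  let p := nat_of_ord x.1 in let q := nat_of_ord y.1 in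
  let i := x.2 in let j := y.2 in
  [|| [&& p == 0, q == 1 & i != j],
      (p == 0) && (q == 2),
      [&& p == 1, q == 2 & i != j],
      (p == 1) && (q == 3),
      [&& p == 2, q == 3 & i != j],
      (p == 0) && (q == 0)
    | (p == 3) && (q == 3)].

Arguments g3_dir s x y : clear implicits.

Definition g3 (s : nat) : rel ('I_4 * 'I_s) :=
  fun x y => (x != y) && (g3_dir s x y || g3_dir s y x).
Arguments g3 s x y : clear implicits.

From mathcomp Require Import all_boot.
From Stdlib Require Import Classical.
Set Implicit Arguments. Unset Strict Implicit. Unset Printing Implicit Defensive.

(* Since s >= 3, any two indices i, j leave a third index k, and the vertices
   r_k, t_k, w_k, z_k alone show that no vertex and no edge of G dominates;
   hence gamma_c(G) >= 3, with equality by {r_i, t_j, z_i} (j <> i).  Both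
   criticalities are witnessed by dominating edges.  For a non-edge uv, the new
   edge uv dominates G + uv unless u and v lie in the same part (then T or W,
   the independent ones), where {t_i, r_j} resp. {w_i, z_j} does instead.  The
   graphs G - r_i, G - t_i, G - w_i, G - z_i are dominated by {t_i, z_j},
   {r_i, t_j}, {z_i, w_j}, {w_i, r_j} (j <> i).  Connected dominating sets of G
   and of every G - v also give 2-connectivity. *)

Section ConnectedDomination.
Variables (T : finType) (e : rel T).
Hypotheses (e_sym : symmetric e) (e_irr : irreflexive e).

Lemma gamma_c_le_cds (S D : {set T}) : is_cds e S D -> exists2 k, k <= #|D| & gamma_c_is e S k.
Proof.
have [n] := ubnP #|D|; elim: n D => // n IHn D ltDn cdsD.
case: (classic (exists2 D', is_cds e S D' & #|D'| < #|D|)) => [[D' cdsD' ltD'D]|minD].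
  have [k leD'k gamma_k] := IHn D' (leq_trans ltD'D ltDn) cdsD'.
  by exists k => //; apply: leq_trans leD'k (ltnW ltD'D).
exists #|D| => //; split; first by exists D.
by move=> D' cdsD'; rewrite leqNgt; apply/negP => ltD'D; apply: minD; exists D'.
Qed.

Lemma add_edge_sym u v : symmetric (add_edge e u v).
Proof.
move=> x y; rewrite /add_edge e_sym.
by case: (e y x) (x == u) (x == v) (y == u) (y == v) => [] [] [] [] [].
Qed.

Lemma induced_connected_star (D : {set T}) h :
  h \in D -> (forall x, x \in D -> (x == h) || e x h) -> induced_connected e D.
Proof.
move=> hD star; split; first by apply/set0Pn; exists h.
set eD := fun a b => [&& e a b, a \in D & b \in D].
have eD_sym : connect_sym eD.
  by apply: sym_connect_sym => a b; rewrite /eD e_sym (andbC (a \in D)).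
have to_h x : x \in D -> connect eD x h.
  move=> xD; case/orP: (star x xD) => [/eqP->|xh]; first exact: connect0.
  by apply: connect1; rewrite /eD xh xD hD.
by move=> x y xD yD; apply: connect_trans (to_h x xD) _; rewrite eD_sym; apply: to_h.
Qed.

Lemma cds_induced_connected (S D : {set T}) : is_cds e S D -> induced_connected e S.
Proof.
move=> [sDS [domD [/set0Pn[d dD] connD]]].
split; first by apply/set0Pn; exists d; apply: (subsetP sDS).
set eS := fun a b => [&& e a b, a \in S & b \in S].
have eS_sym : connect_sym eS.
  by apply: sym_connect_sym => a b; rewrite /eS e_sym (andbC (a \in S)).
have to_D x : x \in S -> exists2 d, d \in D & connect eS x d.
  move=> xS; case: (domD x xS) => [xD|[d' d'D xd']]; first by exists x => //; apply: connect0.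
  by exists d' => //; apply: connect1; rewrite /eS xd' xS (subsetP sDS).
have within_D d1 d2 : d1 \in D -> d2 \in D -> connect eS d1 d2.
  move=> d1D d2D; apply: (connect_sub _ (connD d1 d2 d1D d2D)) => a b /and3P[ab aD bD].
  by apply: connect1; rewrite /eS ab !(subsetP sDS).
move=> x y xS yS; have [dx dxD xdx] := to_D x xS; have [dy dyD ydy] := to_D y yS.
apply: connect_trans xdx _; apply: connect_trans (within_D _ _ dxD dyD) _.
by rewrite eS_sym.
Qed.

Lemma cds_two_connected : 2 < #|T| -> (exists D, is_cds e setT D) ->
  (forall v, exists D, is_cds e (setT :\ v) D) -> two_connected e.
Proof.
move=> T_gt2 [D cdsD] cds_del; split=> //; split; first exact: cds_induced_connected cdsD.
by move=> v; have [Dv cdsDv] := cds_del v; apply: cds_induced_connected cdsDv.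
Qed.

Lemma cds_set2 (S : {set T}) a b : a \in S -> b \in S -> (a == b) || e a b ->
  (forall v, v \in S -> [|| v == a, v == b, e v a | e v b]) -> is_cds e S [set a; b].
Proof.
move=> aS bS ab domab; split.
  by apply/subsetP => x; rewrite !inE => /orP[]/eqP->.
split.
  move=> v vS; case/or4P: (domab v vS) => [/eqP->|/eqP->|va|vb].
  - by left; rewrite !inE eqxx.
  - by left; rewrite !inE eqxx orbT.
  - by right; exists a => //; rewrite !inE eqxx.
  - by right; exists b => //; rewrite !inE eqxx orbT.
apply: (induced_connected_star (h := a)); first by rewrite !inE eqxx.
by move=> x; rewrite !inE => /orP[]/eqP->; rewrite ?eqxx // eq_sym e_sym.
Qed.

Lemma cds_set3 (S : {set T}) a b c : a \in S -> b \in S -> c \in S -> e a b -> e c b ->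
  (forall v, v \in S -> [|| v == a, v == b, v == c, e v a, e v b | e v c]) ->
  is_cds e S [set a; b; c].
Proof.
move=> aS bS cS ab cb domabc; split.
  by apply/subsetP => x; rewrite !inE => /orP[/orP[]|]/eqP->.
split.
  move=> v vS; case/or4P: (domabc v vS) => [/eqP->|/eqP->|/eqP->|/or3P[va|vb|vc]].
  - by left; rewrite !inE eqxx.
  - by left; rewrite !inE eqxx !orbT.
  - by left; rewrite !inE eqxx !orbT.
  - by right; exists a => //; rewrite !inE eqxx.
  - by right; exists b => //; rewrite !inE eqxx !orbT.
  - by right; exists c => //; rewrite !inE eqxx !orbT.
apply: (induced_connected_star (h := b)); first by rewrite !inE eqxx orbT.
by move=> x; rewrite !inE => /orP[/orP[]|]/eqP->; rewrite ?eqxx ?ab ?cb ?orbT.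
Qed.

Lemma cds_card_le2 (S D : {set T}) : is_cds e S D -> #|D| <= 2 -> exists a b,
  ((a == b) || e a b) /\ forall v, v \in S -> [|| v == a, v == b, e v a | e v b].
Proof.
move=> [_ [domD [D0 connD]]] leD2.
have [a [b [Dab ab]]] : exists a b, D = [set a; b] /\ ((a == b) || e a b).
  have : (#|D| == 1) || (#|D| == 2).
    by move: D0 leD2; rewrite -card_gt0; case: #|D| => [|[|[|]]].
  case/orP => [/cards1P[a ->]|/cards2P[a [b [neq_ab Dab]]]].
    by exists a, a; rewrite setUid eqxx.
  exists a, b; split => //; apply/orP; right.
  have := connD a b; rewrite Dab !inE !eqxx orbT => /(_ isT isT).
  case/connectP => -[|z p] /=; first by move=> _ eq_ab; rewrite eq_ab eqxx in neq_ab.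
  move=> /andP[/and3P[az _ zD] _] _; move: zD; rewrite !inE => /orP[/eqP zE|/eqP <- //].
  by rewrite zE e_irr in az.
exists a, b; split => // v vS; case: (domD v vS); rewrite Dab.
  by rewrite !inE => /orP[]->; rewrite ?orbT.
by move=> [d]; rewrite !inE => /orP[]/eqP-> ->; rewrite ?orbT.
Qed.

Lemma gamma_c_lt3_cds_set2 S a b :
  is_cds e S [set a; b] -> exists2 k, k < 3 & gamma_c_is e S k.
Proof.
case/gamma_c_le_cds => k lek gamma_k; exists k => //.
by apply: leq_ltn_trans lek _; rewrite cards2 !ltnS leq_b1.
Qed.

End ConnectedDomination.

Lemma add_edge_cds_set2 (T : finType) (e : rel T) u v : symmetric e ->
  (forall x, [|| x == u, x == v, e x u | e x v]) -> is_cds (add_edge e u v) setT [set u; v].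
Proof.
move=> e_sym dom_uv; apply: cds_set2; rewrite ?inE //; first exact: add_edge_sym.
  by rewrite /add_edge !eqxx /= !orbT.
by move=> x _; rewrite /add_edge; case/or4P: (dom_uv x) => ->; rewrite ?orbT.
Qed.

Definition partR : 'I_4 := @Ordinal 4 0 isT.
Definition partT : 'I_4 := @Ordinal 4 1 isT.
Definition partW : 'I_4 := @Ordinal 4 2 isT.
Definition partZ : 'I_4 := @Ordinal 4 3 isT.

Lemma part_eqE (p q : 'I_4) : (p == q) = (nat_of_ord p == nat_of_ord q).
Proof. by []. Qed.

Ltac unfold_g3 := rewrite /add_edge /g3 /g3_dir /= ?xpair_eqE ?part_eqE /=.

Ltac intro_vertex := let v := fresh "v" in move=> v; case: v => [[[|[|[|[|?]]]] ?] ?] //.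

(* Split on [x == y] for every two indices x, y in the context. *)
Ltac case_indices := repeat match goal with
 | x : ?A, y : ?B |- _ =>
   let _ := constr:(nat_of_ord x) in let _ := constr:(nat_of_ord y) in
   let _ := constr:(x == y) in
   lazymatch goal with
   | _ : is_true (x != y) |- _ => fail
   | _ : is_true (y != x) |- _ => fail
   | _ => tryif constr_eq x y then fail else (case: (eqVneq x y) => [?|?]; [subst x|])
   end
 end.

Ltac close_by_indices :=
  try (match goal with H : is_true (?x != ?x) |- _ => by rewrite eqxx in H end);
  repeat match goal with H : is_true (?x != ?y) |- _ =>
    rewrite ?(negbTE H) ?(negbTE (contra_neq esym H)); clear H end;
  rewrite ?eqxx; by [].

Ltac g3_cases := unfold_g3; case_indices; close_by_indices.

Section G3.
Variable s : nat.
Hypothesis s_gt2 : 2 < s.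

Lemma g3_sym : symmetric (g3 s).
Proof. by move=> x y; rewrite /g3 eq_sym orbC. Qed.

Lemma g3_irrefl : irreflexive (g3 s).
Proof. by move=> x; rewrite /g3 eqxx. Qed.

Lemma exists_third_index (i j : 'I_s) : exists k, (k != i) && (k != j).
Proof.
have /subsetPn[k _] : ~~ ([set: 'I_s] \subset [set i; j]).
  apply: contraTN s_gt2 => /subset_leq_card; rewrite cardsT card_ord cards2 -leqNgt.
  by move/leq_trans->; case: (i != j).
by rewrite !inE negb_or; exists k.
Qed.

Lemma g3_no_dominating_pair a b : (a == b) || g3 s a b ->
  ~ forall v, [|| v == a, v == b, g3 s v a | g3 s v b].
Proof.
move: a b => [[[|[|[|[|?]]]] ?] i] // [[[|[|[|[|?]]]] ?] j] // ab dom;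
have [k /andP[ki kj]] := exists_third_index i j;
move: ab (dom (partR, k)) (dom (partT, k)) (dom (partW, k)) (dom (partZ, k))
  (dom (partR, i)) (dom (partT, i)) (dom (partW, i)) (dom (partZ, i))
  (dom (partR, j)) (dom (partT, j)) (dom (partW, j)) (dom (partZ, j)); clear dom;
g3_cases.
Qed.

Lemma g3_cds_card_ge3 (D : {set 'I_4 * 'I_s}) : is_cds (g3 s) setT D -> 3 <= #|D|.
Proof.
move=> cdsD; rewrite leqNgt ltnS; apply/negP => leD2.
have [a [b [ab domab]]] := cds_card_le2 g3_irrefl cdsD leD2.
by apply: (g3_no_dominating_pair ab) => v; apply: domab.
Qed.

Lemma g3_gamma_c : gamma_c_is (g3 s) setT 3.
Proof.
have i : 'I_s := Ordinal (ltn_trans (isT : 0 < 2) s_gt2).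
have [j /andP[ji _]] := exists_third_index i i.
set D := [set (partR, i); (partT, j); (partZ, i)].
have cdsD : is_cds (g3 s) setT D.
  apply: cds_set3; rewrite ?inE //; first exact: g3_sym.
  - by g3_cases.
  - by intro_vertex => _; g3_cases.
split => [|D' cdsD']; last exact: g3_cds_card_ge3.
exists D; split => //; apply/eqP; rewrite eqn_leq g3_cds_card_ge3 // andbT.
by rewrite (leq_trans (leq_card_setU _ _)) // cards1 cards2 addn1; case: (_ != _).
Qed.

Lemma g3_nonedge_dominates u v : u.1 != v.1 -> ~~ g3 s u v ->
  forall x, [|| x == u, x == v, g3 s x u | g3 s x v].
Proof.
move: u v => [[[|[|[|[|?]]]] ?] ?] // [[[|[|[|[|?]]]] ?] ?] //.
all: by move=> + + [[[|[|[|[|?]]]] ?] ?] //; g3_cases.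
Qed.

Ltac add_edge_witness a b :=
  exists a, b; apply: cds_set2; rewrite ?inE //;
  [by apply: add_edge_sym; apply: g3_sym | by g3_cases | by intro_vertex => _; g3_cases].

Lemma g3_add_edge_cds_set2 u v : u != v -> ~~ g3 s u v ->
  exists a b, is_cds (add_edge (g3 s) u v) setT [set a; b].
Proof.
have [same_part uv nuv|other_part uv nuv] := eqVneq u.1 v.1; last first.
  by exists u, v; apply: add_edge_cds_set2 g3_sym _; apply: g3_nonedge_dominates.
move: u v same_part uv nuv => [[[|[|[|[|?]]]] ?] i] [[[|[|[|[|?]]]] ?] j] //= _;
case_indices; try by unfold_g3; close_by_indices.
- add_edge_witness (partT, i) (partR, j).
- add_edge_witness (partW, i) (partZ, j).
Qed.

Ltac deletion_witness a b :=
  exists a, b; apply: cds_set2; [by apply: g3_sym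
  | by rewrite !inE; g3_cases | by rewrite !inE; g3_cases | by g3_cases
  | intro_vertex; rewrite !inE; g3_cases].

Lemma g3_delete_cds_set2 v : exists a b, is_cds (g3 s) (setT :\ v) [set a; b].
Proof.
move: v => [[[|[|[|[|?]]]] ?] i] //; have [j /andP[ji _]] := exists_third_index i i.
- deletion_witness (partT, i) (partZ, j).
- deletion_witness (partR, i) (partT, j).
- deletion_witness (partZ, i) (partW, j).
- deletion_witness (partW, i) (partR, j).
Qed.

Lemma g3_two_connected : two_connected (g3 s).
Proof.
apply: cds_two_connected g3_sym _ _ _.
- by rewrite card_prod !card_ord (leq_trans s_gt2) ?leq_pmull.
- by have [[D [cdsD _]] _] := g3_gamma_c; exists D.
- by move=> v; have [a [b cds]] := g3_delete_cds_set2 v; exists [set a; b].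
Qed.

End G3.

Theorem lemma4p8 (s : nat) : 3 <= s -> maximal_vertex_critical (g3 s) 3.
Proof.
move=> s_gt2; split; split; first exact: g3_gamma_c.
- move=> u v uv nuv; have [a [b cds]] := g3_add_edge_cds_set2 uv nuv.
  exact: gamma_c_lt3_cds_set2 cds.
- exact: g3_two_connected.
- split; first exact: g3_gamma_c.
  move=> v; have [a [b cds]] := g3_delete_cds_set2 s_gt2 v.
  exact: gamma_c_lt3_cds_set2 cds.
Qed.
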